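(* For every integer $n\geq 2$, the operator $W_n^{*}$ on $H^2$ is Devaney chaotic.
   Context: $H^2$ denotes the Hardy space of analytic functions $f(z)=\sum_{k\ge0}\hat f(k)z^k$ on the open unit disk with $\sum_{k}|\hat f(k)|^2<\infty$. For $n\in\mathbb{N}$, $W_n$ is the bounded operator on $H^2$ given by $W_nf(z)=(1+z+\cdots+z^{n-1})f(z^n)$, and $W_n^{*}$ is its adjoint. An operator $T$ on a separable Banach space $Y$ is Devaney chaotic if it is hypercyclic (some vector has dense orbit) and its set of periodic points (vectors $f$ with $T^kf=f$ for some $k\in\mathbb{N}$) is dense in $Y$. *)

From Stdlib Require Import Reals.
From Coquelicot Require Import Coquelicot.

(* An element f of H^2 is represented by its Taylor coefficient sequence
   (f^(k))_k : nat -> C; f is in H^2 iff sum_k |f^(k)|^2 < oo. *)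
Definition in_H2 (a : nat -> C) : Prop :=
  ex_series (fun k => (Cmod (a k) ^ 2)%R).

Definition H2norm (a : nat -> C) : R :=
  sqrt (Series (fun k => (Cmod (a k) ^ 2)%R)).

Definition H2sub (a b : nat -> C) : nat -> C := fun k => (a k - b k)%C.

Definition H2inner_is (a b : nat -> C) (l : C) : Prop :=
  is_series (fun k => (a k * Cconj (b k))%C) l.

(* W_n f (z) = (1 + z + ... + z^(n-1)) f(z^n), on coefficients:
   the coefficient of z^(n*k + j), 0 <= j < n, is f^(k); i.e. (W_n f)^(m) = f^(m / n). *)
Definition W (n : nat) (a : nat -> C) : nat -> C := fun m => a (m / n)%nat.

Definition is_adjoint_W (n : nat) (T : (nat -> C) -> (nat -> C)) : Prop :=
  (forall g, in_H2 g -> in_H2 (T g)) /\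
  (forall f g, in_H2 f -> in_H2 g ->
     exists l, H2inner_is (W n f) g l /\ H2inner_is f (T g) l).

Definition hypercyclic (T : (nat -> C) -> (nat -> C)) : Prop :=
  exists f, in_H2 f /\
    forall g, in_H2 g -> forall eps : R, (0 < eps)%R ->
      exists k : nat, (H2norm (H2sub (Nat.iter k T f) g) < eps)%R.

Definition periodic_point (T : (nat -> C) -> (nat -> C)) (f : nat -> C) : Prop :=
  exists k : nat, (1 <= k)%nat /\ Nat.iter k T f = f.

Definition dense_periodic_points (T : (nat -> C) -> (nat -> C)) : Prop :=
  forall g, in_H2 g -> forall eps : R, (0 < eps)%R ->
    exists f, in_H2 f /\ periodic_point T f /\ (H2norm (H2sub f g) < eps)%R.

Definition devaney_chaotic (T : (nat -> C) -> (nat -> C)) : Prop :=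
  hypercyclic T /\ dense_periodic_points T.

From Stdlib Require Import Reals Lra Lia ZArith FunctionalExtensionality.
From Stdlib Require Cantor.
From Coquelicot Require Import Coquelicot.

(* On Taylor coefficients (W_n^* g)_j = sum_(r<n) g_(nj+r), so (W_n^* )^D sums blocks
   of length q = n^D and maps (1/q) W_q y back to y.  Hence if f equals z_0 on [0, q_0)
   and (1/q_0) W_(q_0) f' beyond, with q_0 = n^(D_0), then (W_n^* )^(D_0) f = f' as soon
   as the coefficients of z_0 add up to f'(0).  Nesting this gives "towers" built from
   blocks z_0, z_1, ... on which the operator acts as a shift, and since
   ||(1/q) W_q y||^2 = ||y||^2 / q, all levels but the first weigh almost nothing when
   the q_k grow fast enough.
   A constant tower whose block x satisfies sum_(i<q) x_i = x_0 is periodic; taking for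
   x a truncation of g followed by many tiny coefficients that fix the sum gives
   periodic points near g.  Letting the blocks run through a countable dense set, each
   padded so that its sum is the constant term of the next block, gives a vector whose
   orbit comes close to every element of H^2. *)

Open Scope R_scope.

Fixpoint csum (a : nat -> C) (N : nat) : C :=
  match N with O => 0%C | S N => (csum a N + a N)%C end.

Fixpoint rsum (a : nat -> R) (N : nat) : R :=
  match N with O => 0 | S N => rsum a N + a N end.

Lemma csum_ext (a b : nat -> C) N :
  (forall i, (i < N)%nat -> a i = b i) -> csum a N = csum b N.
Proof.
  induction N as [|N IH]; intros H; simpl; [reflexivity|].
  rewrite IH, (H N) by (lia || (intros; apply H; lia)); reflexivity.
Qed.

Lemma csum_zero (a : nat -> C) N : (forall i, (i < N)%nat -> a i = 0%C) -> csum a N = 0%C.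
Proof.
  induction N as [|N IH]; intros H; simpl; [reflexivity|].
  rewrite IH, (H N) by (lia || (intros; apply H; lia)); ring.
Qed.

Lemma csum_const (c : C) N : csum (fun _ => c) N = (INR N * c)%C.
Proof. induction N as [|N IH]; cbn [csum]; [simpl; ring|]. rewrite IH, S_INR, RtoC_plus. ring. Qed.

Lemma csum_split (a : nat -> C) M N :
  csum a (M + N) = (csum a M + csum (fun i => a (M + i)%nat) N)%C.
Proof.
  induction N as [|N IH]; simpl.
  - rewrite Nat.add_0_r. ring.
  - rewrite Nat.add_succ_r. simpl. rewrite IH. ring.
Qed.

Lemma csum_window (a : nat -> C) M L N :
  (forall i, (i < M \/ M + L <= i)%nat -> a i = 0%C) -> (M + L <= N)%nat ->
  csum a N = csum (fun i => a (M + i)%nat) L.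
Proof.
  intros Ha HN. replace N with (M + L + (N - (M + L)))%nat by lia.
  rewrite !csum_split, (csum_zero a M), (csum_zero _ (N - (M + L))).
  - ring.
  - intros i _. apply Ha. lia.
  - intros i Hi. apply Ha. lia.
Qed.

Lemma csum_conj (a : nat -> C) N : Cconj (csum a N) = csum (fun i => Cconj (a i)) N.
Proof.
  induction N as [|N IH]; simpl.
  - apply injective_projections; simpl; ring.
  - rewrite Cplus_conj, IH. reflexivity.
Qed.

Lemma csum_blocks (u : nat -> C) q M :
  csum (fun j => csum (fun r => u (q * j + r)%nat) q) M = csum u (q * M).
Proof.
  induction M as [|M IH]; simpl; [now rewrite Nat.mul_0_r|].
  rewrite IH, <- csum_split. f_equal. lia.
Qed.

Lemma rsum_ext (a b : nat -> R) N :
  (forall i, (i < N)%nat -> a i = b i) -> rsum a N = rsum b N.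
Proof.
  induction N as [|N IH]; intros H; simpl; [reflexivity|].
  rewrite IH, (H N) by (lia || (intros; apply H; lia)); reflexivity.
Qed.

Lemma rsum_le (a b : nat -> R) N :
  (forall i, (i < N)%nat -> a i <= b i) -> rsum a N <= rsum b N.
Proof.
  induction N as [|N IH]; intros H; simpl; [lra|].
  pose proof (H N ltac:(lia)). pose proof (IH (fun i Hi => H i ltac:(lia))). lra.
Qed.

Lemma rsum_nonneg (a : nat -> R) N : (forall i, 0 <= a i) -> 0 <= rsum a N.
Proof. intros H. induction N as [|N IH]; simpl; [lra|]. specialize (H N). lra. Qed.

Lemma rsum_const (c : R) N : rsum (fun _ => c) N = INR N * c.
Proof. induction N as [|N IH]; cbn [rsum]; [simpl; ring|]. rewrite IH, S_INR. ring. Qed.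

Lemma rsum_plus (a b : nat -> R) N : rsum (fun i => a i + b i) N = rsum a N + rsum b N.
Proof. induction N as [|N IH]; simpl; [ring|]. rewrite IH. ring. Qed.

Lemma rsum_scal (c : R) (a : nat -> R) N : rsum (fun i => c * a i) N = c * rsum a N.
Proof. induction N as [|N IH]; simpl; [ring|]. rewrite IH. ring. Qed.

Lemma rsum_split (a : nat -> R) M N :
  rsum a (M + N) = rsum a M + rsum (fun i => a (M + i)%nat) N.
Proof.
  induction N as [|N IH]; simpl.
  - rewrite Nat.add_0_r. ring.
  - rewrite Nat.add_succ_r. simpl. rewrite IH. ring.
Qed.

Lemma rsum_blocks (u : nat -> R) q M :
  rsum (fun j => rsum (fun r => u (q * j + r)%nat) q) M = rsum u (q * M).
Proof.
  induction M as [|M IH]; simpl; [now rewrite Nat.mul_0_r|].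
  rewrite IH, <- rsum_split. f_equal. lia.
Qed.

Lemma sum_n_rsum (a : nat -> R) N : sum_n a N = rsum a (S N).
Proof.
  induction N as [|N IH]; [rewrite sum_O; simpl; ring|].
  rewrite sum_Sn, IH. reflexivity.
Qed.

Lemma sum_n_csum (a : nat -> C) N : sum_n a N = csum a (S N).
Proof.
  induction N as [|N IH]; [rewrite sum_O; simpl; ring|].
  rewrite sum_Sn, IH. reflexivity.
Qed.

Lemma is_series_window (a : nat -> C) M L :
  (forall i, (i < M \/ M + L <= i)%nat -> a i = 0%C) ->
  is_series a (csum (fun i => a (M + i)%nat) L).
Proof.
  intros Ha. apply filterlim_ext_loc with (f := fun _ => csum (fun i => a (M + i)%nat) L).
  - exists (M + L)%nat. intros N HN. rewrite sum_n_csum. symmetry.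
    apply csum_window; [exact Ha|lia].
  - apply filterlim_const.
Qed.

Lemma is_series_C_unique (a : nat -> C) l1 l2 : is_series a l1 -> is_series a l2 -> l1 = l2.
Proof. apply (filterlim_locally_unique (F := eventually)). Qed.

Lemma div_block q j r : (r < q)%nat -> ((q * j + r) / q = j)%nat.
Proof. intros Hr. symmetry. now apply (Nat.div_unique _ _ _ r). Qed.

Lemma succ_div_lt K m : (2 <= m)%nat -> (m < K)%nat -> (S (K / m) < K)%nat.
Proof.
  intros Hm HK. assert (K / m <= K / 2)%nat by (apply Nat.div_le_compat_l; lia).
  pose proof (Nat.Div0.mul_div_le K 2). lia.
Qed.

Lemma pow_ge_2 n D : (2 <= n)%nat -> (1 <= D)%nat -> (2 <= n ^ D)%nat.
Proof. intros Hn HD. pose proof (Nat.pow_le_mono_r n 1 D ltac:(lia) HD). simpl in *. lia. Qed.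

Lemma RtoC_INR_neq_0 m : (0 < m)%nat -> RtoC (INR m) <> 0%C.
Proof. intros Hm H. apply RtoC_inj in H. apply (lt_0_INR m) in Hm. lra. Qed.

Lemma INR_mul_div_INR m (x : C) : (0 < m)%nat -> (INR m * (x / INR m))%C = x.
Proof.
  (* [field] does not terminate on goals mentioning [RtoC (INR m)]. *)
  intros Hm. generalize (RtoC_INR_neq_0 m Hm). generalize (RtoC (INR m)).
  intros c Hc. field. exact Hc.
Qed.

Definition natceil (r : R) : nat := Z.to_nat (up r).

Lemma natceil_ge r : r <= INR (natceil r).
Proof.
  unfold natceil. destruct (archimed r) as [Hup _].
  destruct (Z_le_gt_dec (up r) 0) as [Hneg|Hpos].
  - replace (Z.to_nat (up r)) with 0%nat by lia. apply IZR_le in Hneg. simpl. lra.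
  - rewrite INR_IZR_INZ, Z2Nat.id by lia. lra.
Qed.

Lemma Rdiv_le_of_natceil X e M :
  0 < e -> (natceil (X / e) <= M)%nat -> (0 < M)%nat -> X / INR M <= e.
Proof.
  intros He HXM HM. pose proof (natceil_ge (X / e)). apply le_INR in HXM.
  assert (HMR : 0 < INR M) by now apply lt_0_INR.
  apply Rle_div_l; [lra|]. apply Rle_trans with (e * (X / e)); [right; field; lra|].
  apply Rmult_le_compat_l; lra.
Qed.

Definition block_exp (M : nat) (B e : R) : nat := (M + natceil (B / e))%nat.

Lemma block_exp_lt_pow n M B e : (2 <= n)%nat -> (M < n ^ block_exp M B e)%nat.
Proof.
  intros Hn. pose proof (Nat.pow_gt_lin_r n (block_exp M B e) ltac:(lia)).
  unfold block_exp in *. lia.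
Qed.

Lemma block_exp_div_le n M B e :
  (2 <= n)%nat -> 0 < e -> B / INR (n ^ block_exp M B e) <= e.
Proof.
  intros Hn He. pose proof (Nat.pow_gt_lin_r n (block_exp M B e) ltac:(lia)).
  apply Rdiv_le_of_natceil; [exact He|unfold block_exp in *; lia|lia].
Qed.

Definition sqsum (a : nat -> C) (K : nat) : R := rsum (fun i => Cmod (a i) ^ 2) K.

Definition trunc (a : nat -> C) (N : nat) : nat -> C :=
  fun i => if (i <? N)%nat then a i else 0%C.

Lemma sqsum_nonneg (a : nat -> C) K : 0 <= sqsum a K.
Proof. apply rsum_nonneg. intros. apply pow2_ge_0. Qed.

Lemma sqsum_split (a : nat -> C) M N :
  sqsum a (M + N) = sqsum a M + rsum (fun i => Cmod (a (M + i)%nat) ^ 2) N.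
Proof. apply rsum_split. Qed.

Lemma sqsum_mono (a : nat -> C) K K' : (K <= K')%nat -> sqsum a K <= sqsum a K'.
Proof.
  intros HK. replace K' with (K + (K' - K))%nat by lia. rewrite sqsum_split.
  pose proof (rsum_nonneg (fun i => Cmod (a (K + i)%nat) ^ 2) (K' - K) (fun _ => pow2_ge_0 _)).
  lra.
Qed.

Lemma sqsum_ext (a b : nat -> C) K :
  (forall i, (i < K)%nat -> a i = b i) -> sqsum a K = sqsum b K.
Proof. intros H. apply rsum_ext. intros i Hi. now rewrite H. Qed.

Lemma sqsum_zero (a : nat -> C) K : (forall i, (i < K)%nat -> a i = 0%C) -> sqsum a K = 0.
Proof.
  intros H. unfold sqsum. rewrite (rsum_ext _ (fun _ => 0)), rsum_const; [ring|].
  intros i Hi. rewrite H, Cmod_0 by exact Hi. ring.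
Qed.

Lemma sqsum_support (a : nat -> C) M K :
  (forall i, (M <= i)%nat -> a i = 0%C) -> (M <= K)%nat -> sqsum a K = sqsum a M.
Proof.
  intros Ha HK. replace K with (M + (K - M))%nat by lia.
  rewrite sqsum_split, (rsum_ext _ (fun _ => 0)), rsum_const; [ring|].
  intros i _. rewrite Ha, Cmod_0 by lia. ring.
Qed.

Lemma sqsum_le_window (a : nat -> C) M L e K :
  (forall i, (i < M \/ M + L <= i)%nat -> a i = 0%C) ->
  (forall i, (M <= i < M + L)%nat -> Cmod (a i) ^ 2 <= e) ->
  sqsum a K <= INR L * e.
Proof.
  intros Hout Hin.
  apply Rle_trans with (sqsum a (K + (M + L))); [apply sqsum_mono; lia|].
  rewrite (sqsum_support a (M + L)), sqsum_split, sqsum_zero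
    by first [lia | intros; apply Hout; lia].
  rewrite <- rsum_const, Rplus_0_l. apply rsum_le. intros i Hi. apply Hin. lia.
Qed.

Lemma sqsum_blocks (a : nat -> C) q M :
  sqsum a (q * M) = rsum (fun j => sqsum (fun r => a (q * j + r)%nat) q) M.
Proof. unfold sqsum. now rewrite <- rsum_blocks. Qed.

Lemma Cmod_add_sq_le (a b : C) : Cmod (a + b)%C ^ 2 <= 2 * Cmod a ^ 2 + 2 * Cmod b ^ 2.
Proof.
  assert (Cmod (a + b)%C ^ 2 <= (Cmod a + Cmod b) ^ 2).
  { apply pow_incr. split; [apply Cmod_ge_0 | apply Cmod_triangle]. }
  pose proof (pow2_ge_0 (Cmod a - Cmod b)). nra.
Qed.

Lemma sqsum_sub_le2 (a b c : nat -> C) K :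
  sqsum (H2sub a c) K <= 2 * sqsum (H2sub a b) K + 2 * sqsum (H2sub b c) K.
Proof.
  unfold sqsum. rewrite <- !rsum_scal, <- rsum_plus. apply rsum_le. intros i _.
  unfold H2sub. replace (a i - c i)%C with ((a i - b i) + (b i - c i))%C by ring.
  apply Cmod_add_sq_le.
Qed.

Lemma sqsum_sub_le3 (a b c d : nat -> C) K :
  sqsum (H2sub a d) K
  <= 2 * sqsum (H2sub a b) K + 4 * sqsum (H2sub b c) K + 4 * sqsum (H2sub c d) K.
Proof. pose proof (sqsum_sub_le2 a b d K). pose proof (sqsum_sub_le2 b c d K). lra. Qed.

Lemma sum_n_sqsum_incr (a : nat -> C) m :
  sum_n (fun k => Cmod (a k) ^ 2) m <= sum_n (fun k => Cmod (a k) ^ 2) (S m).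
Proof.
  rewrite !sum_n_rsum. change (sqsum a (S m) <= sqsum a (S (S m))). apply sqsum_mono. lia.
Qed.

Lemma sqsum_bounded_is_series (a : nat -> C) B :
  (forall K, sqsum a K <= B) -> exists l, is_series (fun k => Cmod (a k) ^ 2) l /\ l <= B.
Proof.
  intros H.
  destruct (ex_finite_lim_seq_incr (sum_n (fun k => Cmod (a k) ^ 2)) B) as [l Hl].
  - apply sum_n_sqsum_incr.
  - intros m. rewrite sum_n_rsum. exact (H (S m)).
  - exists l. split; [exact Hl|].
    apply (is_lim_seq_le (sum_n (fun k => Cmod (a k) ^ 2)) (fun _ => B) l B);
      [|exact Hl|apply is_lim_seq_const].
    intros m. rewrite sum_n_rsum. exact (H (S m)).
Qed.

Lemma in_H2_of_sqsum_le (a : nat -> C) B : (forall K, sqsum a K <= B) -> in_H2 a.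
Proof. intros H. destruct (sqsum_bounded_is_series a B H) as [l [Hl _]]. now exists l. Qed.

Lemma H2norm_lt_of_sqsum_le (a : nat -> C) B eps :
  (forall K, sqsum a K <= B) -> B < eps ^ 2 -> 0 < eps -> H2norm a < eps.
Proof.
  intros H HB Heps. destruct (sqsum_bounded_is_series a B H) as [l [Hl HlB]].
  unfold H2norm. rewrite (is_series_unique _ _ Hl).
  pose proof (sqsum_nonneg a 0). pose proof (H 0%nat).
  apply Rle_lt_trans with (sqrt B); [now apply sqrt_le_1_alt|].
  rewrite <- (sqrt_pow2 eps) by lra. apply sqrt_lt_1_alt. lra.
Qed.

Lemma H2_tail_small (a : nat -> C) d :
  in_H2 a -> 0 < d ->
  exists N0, forall N, (N0 <= N)%nat -> forall K, sqsum (H2sub (trunc a N) a) K <= d.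
Proof.
  intros [l Hl] Hd.
  assert (Hle : forall K, sqsum a K <= l).
  { intros K. apply Rle_trans with (sqsum a (S K)); [apply sqsum_mono; lia|].
    change (rsum (fun k => Cmod (a k) ^ 2) (S K) <= l). rewrite <- sum_n_rsum.
    exact (is_lim_seq_incr_compare _ l Hl (sum_n_sqsum_incr a) K). }
  assert (Hl' : is_lim_seq (sum_n (fun k => Cmod (a k) ^ 2)) l) by exact Hl.
  destruct (proj2 (is_lim_seq_spec _ _) Hl' (mkposreal d Hd)) as [N0 HN0].
  exists (S N0). intros N HN K.
  specialize (HN0 N0 (le_n _)). rewrite sum_n_rsum in HN0.
  apply Rabs_lt_between in HN0. cbn [pos] in HN0. fold (sqsum a (S N0)) in HN0.
  pose proof (sqsum_mono a (S N0) N HN). pose proof (Hle (N + K)%nat).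
  apply Rle_trans with (sqsum (H2sub (trunc a N) a) (N + K)); [apply sqsum_mono; lia|].
  rewrite sqsum_split, sqsum_zero.
  2:{ intros i Hi. unfold H2sub, trunc. destruct (Nat.ltb_spec i N); [ring|lia]. }
  rewrite (rsum_ext _ (fun i => Cmod (a (N + i)%nat) ^ 2)).
  2:{ intros i _. unfold H2sub, trunc. destruct (Nat.ltb_spec (N + i) N); [lia|].
      replace (0 - a (N + i)%nat)%C with (- a (N + i)%nat)%C by ring. now rewrite Cmod_opp. }
  rewrite sqsum_split in *. lra.
Qed.

(** * The adjoint of W_n on coefficients *)

Definition basis (j : nat) : nat -> C := fun m => if (m =? j)%nat then 1%C else 0%C.

Lemma in_H2_basis j : in_H2 (basis j).
Proof.
  apply (in_H2_of_sqsum_le _ (INR 1 * 1)). intros K. apply (sqsum_le_window _ j 1).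
  - intros i Hi. unfold basis. destruct (Nat.eqb_spec i j); [lia|reflexivity].
  - intros i Hi. unfold basis. destruct (Nat.eqb_spec i j); [|lia].
    rewrite Cmod_1. lra.
Qed.

Lemma adjoint_W_coef n T g j :
  (1 <= n)%nat -> is_adjoint_W n T -> in_H2 g ->
  T g j = csum (fun r => g (n * j + r)%nat) n.
Proof.
  intros Hn [_ HT] Hg.
  destruct (HT (basis j) g (in_H2_basis j) Hg) as [l [HWl HTl]].
  assert (HW : is_series (fun k => (W n (basis j) k * Cconj (g k))%C)
                 (csum (fun r => Cconj (g (n * j + r)%nat)) n)).
  { replace (csum _ n)
      with (csum (fun r => (W n (basis j) (n * j + r)%nat * Cconj (g (n * j + r)%nat))%C) n).
    - apply (is_series_window (fun k => (W n (basis j) k * Cconj (g k))%C)).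
      intros i Hi. unfold W, basis.
      destruct (Nat.eqb_spec (i / n) j); [exfalso|ring]. destruct Hi as [Hi|Hi].
      + assert (i / n < j)%nat by (apply Nat.Div0.div_lt_upper_bound; lia). lia.
      + assert (j + 1 <= i / n)%nat by (apply Nat.div_le_lower_bound; lia). lia.
    - apply csum_ext. intros r Hr. unfold W, basis. rewrite div_block, Nat.eqb_refl by lia. ring. }
  assert (HT' : is_series (fun k => (basis j k * Cconj (T g k))%C) (Cconj (T g j))).
  { replace (Cconj (T g j)) with (csum (fun i => (basis j (j + i) * Cconj (T g (j + i)%nat))%C) 1).
    - apply (is_series_window (fun k => (basis j k * Cconj (T g k))%C)).
      intros i Hi. unfold basis. destruct (Nat.eqb_spec i j); [lia|ring].
    - simpl. unfold basis. rewrite Nat.add_0_r, Nat.eqb_refl. ring. }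
  rewrite <- (Cconj_conj (T g j)), (is_series_C_unique _ _ _ HT' HTl).
  rewrite (is_series_C_unique _ _ _ HWl HW), <- csum_conj. apply Cconj_conj.
Qed.

Lemma in_H2_iter n T k g : is_adjoint_W n T -> in_H2 g -> in_H2 (Nat.iter k T g).
Proof. intros HT Hg. induction k as [|k IH]; simpl; [exact Hg|]. now apply HT. Qed.

Lemma adjoint_W_iter_coef n T k g j :
  (1 <= n)%nat -> is_adjoint_W n T -> in_H2 g ->
  Nat.iter k T g j = csum (fun r => g (n ^ k * j + r)%nat) (n ^ k).
Proof.
  intros Hn HT Hg. revert j. induction k as [|k IH]; intros j.
  - simpl. rewrite !Nat.add_0_r. ring.
  - rewrite Nat.iter_succ, (adjoint_W_coef n T _ j Hn HT (in_H2_iter n T k g HT Hg)).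
    replace (n ^ S k)%nat with (n ^ k * n)%nat by (simpl; ring).
    rewrite <- (csum_blocks (fun t => g (n ^ k * n * j + t)%nat) (n ^ k) n).
    apply csum_ext. intros i _. rewrite IH.
    apply csum_ext. intros r _. f_equal. ring.
Qed.

(** * Towers *)

Definition shift {A : Type} (k : nat) (f : nat -> A) : nat -> A := fun l => f (k + l)%nat.

Lemma shift_succ {A : Type} k (f : nat -> A) : shift 1 (shift k f) = shift (S k) f.
Proof. apply functional_extensionality. intros l. unfold shift. f_equal. lia. Qed.

(* Fuel 0 gives a junk value; fuel i + 1 suffices when all q_l >= 2, since every
   recursive call divides the index by q_0 (tower_fuel_enough). *)
Fixpoint tower_fuel (fuel : nat) (z : nat -> nat -> C) (q : nat -> nat) (i : nat) : C :=
  match fuel with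
  | O => 0%C
  | S fuel =>
      if (i <? q 0%nat)%nat then z 0%nat i
      else (tower_fuel fuel (shift 1 z) (shift 1 q) (i / q 0%nat) / INR (q 0%nat))%C
  end.

Definition tower (z : nat -> nat -> C) (q : nat -> nat) (i : nat) : C := tower_fuel (S i) z q i.

Lemma tower_fuel_enough fuel fuel' z q i :
  (forall l, 2 <= q l)%nat -> (i < fuel)%nat -> (i < fuel')%nat ->
  tower_fuel fuel z q i = tower_fuel fuel' z q i.
Proof.
  revert fuel' z q i. induction fuel as [|fuel IH]; intros [|fuel'] z q i Hq Hi Hi'; try lia.
  simpl. destruct (Nat.ltb_spec i (q 0%nat)); [reflexivity|].
  assert (i / q 0%nat < i)%nat by (apply Nat.div_lt; pose proof (Hq 0%nat); lia).
  rewrite (IH fuel'); [reflexivity| |lia|lia]. intros l. apply Hq.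
Qed.

Lemma tower_base z q i : (i < q 0%nat)%nat -> tower z q i = z 0%nat i.
Proof. intros Hi. unfold tower. simpl. now destruct (Nat.ltb_spec i (q 0%nat)); [|lia]. Qed.

Lemma tower_block z q j r :
  (forall l, 2 <= q l)%nat -> (1 <= j)%nat -> (r < q 0%nat)%nat ->
  tower z q (q 0%nat * j + r)%nat = (tower (shift 1 z) (shift 1 q) j / INR (q 0%nat))%C.
Proof.
  intros Hq Hj Hr. pose proof (Hq 0%nat). unfold tower at 1. simpl.
  destruct (Nat.ltb_spec (q 0%nat * j + r) (q 0%nat)); [nia|].
  rewrite div_block by exact Hr. unfold tower. f_equal.
  apply tower_fuel_enough; [intros; apply Hq|nia|lia].
Qed.

Definition tower_budget (z : nat -> nat -> C) (q : nat -> nat) (beta : nat -> R) : Prop :=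
  forall k, 0 <= beta k /\ sqsum (z k) (q k) + beta (S k) / INR (q k) <= beta k.

Lemma tower_budget_shift z q beta k :
  tower_budget z q beta -> tower_budget (shift k z) (shift k q) (shift k beta).
Proof. intros H l. unfold shift. rewrite Nat.add_succ_r. apply H. Qed.

Lemma sqsum_spread (a y : nat -> C) q M :
  (0 < q)%nat ->
  (forall j r, (1 <= j)%nat -> (r < q)%nat -> a (q * j + r)%nat = (y j / INR q)%C) ->
  sqsum a (q * S M) <= sqsum a q + sqsum y (S M) / INR q.
Proof.
  intros Hq Ha. assert (HqR : 0 < INR q) by now apply lt_0_INR.
  rewrite sqsum_blocks, (rsum_split _ 1), (sqsum_split y 1). simpl (rsum _ 1).
  rewrite Nat.mul_0_r. change (sqsum (fun r => a (0 + r)%nat) q) with (sqsum a q).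
  rewrite (rsum_ext _ (fun j => / INR q * Cmod (y (1 + j)%nat) ^ 2)).
  - rewrite rsum_scal. pose proof (sqsum_nonneg y 1). unfold Rdiv.
    pose proof (Rinv_0_lt_compat _ HqR). nra.
  - intros j _. unfold sqsum.
    rewrite (rsum_ext _ (fun _ => (Cmod (y (1 + j)%nat) / INR q) ^ 2)).
    + rewrite rsum_const. field. lra.
    + intros r Hr. rewrite Ha by lia.
      rewrite Cmod_div, Cmod_R, Rabs_pos_eq by (lra || now apply RtoC_INR_neq_0).
      reflexivity.
Qed.

Lemma sqsum_tower_le z q beta :
  (forall l, 2 <= q l)%nat -> tower_budget z q beta ->
  forall K, sqsum (tower z q) K <= beta 0%nat.
Proof.
  intros Hq Hb K. revert z q beta Hq Hb.
  induction K as [K IH] using lt_wf_ind. intros z q beta Hq Hb.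
  destruct (Hb 0%nat) as [_ Hz0]. destruct (Hb 1%nat) as [Hb1 _].
  pose proof (Hq 0%nat) as Hq0. assert (HqR : 0 < INR (q 0%nat)) by (apply lt_0_INR; lia).
  assert (Hfrac : 0 <= beta 1%nat / INR (q 0%nat)) by (apply Rdiv_le_0_compat; lra).
  assert (Hbase : sqsum (tower z q) (q 0%nat) = sqsum (z 0%nat) (q 0%nat))
    by (apply sqsum_ext; intros; now apply tower_base).
  destruct (Nat.le_gt_cases K (q 0%nat)) as [HK|HK].
  - pose proof (sqsum_mono (tower z q) _ _ HK). lra.
  - set (M := (K / q 0%nat)%nat).
    assert (HKM : (K <= q 0%nat * S M)%nat)
      by (pose proof (Nat.mul_succ_div_gt K (q 0%nat)); lia).
    assert (Hup : sqsum (tower (shift 1 z) (shift 1 q)) (S M) <= beta 1%nat).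
    { apply (IH (S M) (succ_div_lt K _ Hq0 HK) _ _ (shift 1 beta)).
      - intros l. apply Hq.
      - now apply tower_budget_shift. }
    pose proof (sqsum_mono (tower z q) _ _ HKM).
    pose proof (sqsum_spread (tower z q) (tower (shift 1 z) (shift 1 q)) (q 0%nat) M
                  ltac:(lia) (fun j r => tower_block z q j r Hq)).
    assert (sqsum (tower (shift 1 z) (shift 1 q)) (S M) / INR (q 0%nat)
            <= beta 1%nat / INR (q 0%nat))
      by (apply Rmult_le_compat_r; [left; now apply Rinv_0_lt_compat | exact Hup]).
    lra.
Qed.

Lemma in_H2_tower z q beta :
  (forall l, 2 <= q l)%nat -> tower_budget z q beta -> in_H2 (tower z q).
Proof. intros Hq Hb. exact (in_H2_of_sqsum_le _ _ (sqsum_tower_le z q beta Hq Hb)). Qed.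

Lemma sqsum_tower_sub_base z q beta :
  (forall l, 2 <= q l)%nat -> tower_budget (shift 1 z) (shift 1 q) (shift 1 beta) ->
  (forall i, (q 0%nat <= i)%nat -> z 0%nat i = 0%C) ->
  forall K, sqsum (H2sub (tower z q) (z 0%nat)) K <= beta 1%nat / INR (q 0%nat).
Proof.
  intros Hq Hb Hz K. pose proof (Hq 0%nat) as Hq0.
  assert (HqR : 0 < INR (q 0%nat)) by (apply lt_0_INR; lia).
  set (M := (K / q 0%nat)%nat).
  apply Rle_trans with (sqsum (H2sub (tower z q) (z 0%nat)) (q 0%nat * S M)).
  { apply sqsum_mono. pose proof (Nat.mul_succ_div_gt K (q 0%nat)). lia. }
  eapply Rle_trans; [apply (sqsum_spread _ (tower (shift 1 z) (shift 1 q))); [lia|]|].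
  - intros j r Hj Hr. unfold H2sub. rewrite tower_block, Hz by (auto; nia). ring.
  - rewrite sqsum_zero by (intros i Hi; unfold H2sub; rewrite tower_base by exact Hi; ring).
    rewrite Rplus_0_l. apply Rmult_le_compat_r; [left; now apply Rinv_0_lt_compat|].
    apply (sqsum_tower_le _ _ _ (fun l => Hq (S l)) Hb).
Qed.

Lemma H2norm_tower_sub_lt z q beta y g e1 e2 eps :
  (forall l, 2 <= q l)%nat -> tower_budget (shift 1 z) (shift 1 q) (shift 1 beta) ->
  (forall i, (q 0%nat <= i)%nat -> z 0%nat i = 0%C) ->
  (forall K, sqsum (H2sub (z 0%nat) y) K <= e1) -> (forall K, sqsum (H2sub y g) K <= e2) ->
  2 * (beta 1%nat / INR (q 0%nat)) + 4 * e1 + 4 * e2 < eps ^ 2 -> 0 < eps ->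
  H2norm (H2sub (tower z q) g) < eps.
Proof.
  intros Hq Hb Hz He1 He2 Heps Heps0.
  apply (H2norm_lt_of_sqsum_le _ (2 * (beta 1%nat / INR (q 0%nat)) + 4 * e1 + 4 * e2));
    [intros K|exact Heps|exact Heps0].
  pose proof (sqsum_sub_le3 (tower z q) (z 0%nat) y g K).
  pose proof (sqsum_tower_sub_base z q beta Hq Hb Hz K).
  specialize (He1 K). specialize (He2 K). lra.
Qed.

Lemma adjoint_iter_tower n T D q z :
  (1 <= n)%nat -> is_adjoint_W n T -> (forall l, 2 <= q l)%nat ->
  q 0%nat = (n ^ D)%nat -> in_H2 (tower z q) -> z 1%nat 0%nat = csum (z 0%nat) (q 0%nat) ->
  Nat.iter D T (tower z q) = tower (shift 1 z) (shift 1 q).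
Proof.
  intros Hn HT Hq HqD Hin Hsum. apply functional_extensionality. intros j.
  rewrite (adjoint_W_iter_coef n T D _ j Hn HT Hin), <- HqD.
  destruct (Nat.eq_dec j 0) as [->|Hj].
  - rewrite tower_base by (pose proof (Hq 1%nat); unfold shift; simpl; lia).
    rewrite Nat.mul_0_r. change (shift 1 z 0%nat) with (z 1%nat). rewrite Hsum.
    apply csum_ext. intros r Hr. apply tower_base. exact Hr.
  - rewrite (csum_ext _ (fun _ => tower (shift 1 z) (shift 1 q) j / INR (q 0%nat))%C).
    + rewrite csum_const. apply INR_mul_div_INR. pose proof (Hq 0%nat). lia.
    + intros r Hr. apply tower_block; [exact Hq|lia|exact Hr].
Qed.

Lemma adjoint_iter_tower_shift n T D q z beta :
  (2 <= n)%nat -> is_adjoint_W n T -> (forall l, 1 <= D l)%nat -> (forall l, q l = n ^ D l)%nat ->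
  tower_budget z q beta -> (forall l, z (S l) 0%nat = csum (z l) (q l)) ->
  forall k, exists m, Nat.iter m T (tower z q) = tower (shift k z) (shift k q).
Proof.
  intros Hn HT HD HqD Hb Hsum.
  assert (Hq : forall l, (2 <= q l)%nat) by (intros l; rewrite HqD; now apply pow_ge_2).
  induction k as [|k [m Hm]]; [exists 0%nat; reflexivity|].
  exists (D k + m)%nat. rewrite Nat.iter_add, Hm, <- (shift_succ k z), <- (shift_succ k q).
  apply (adjoint_iter_tower n T (D k)); [lia|exact HT|intros; apply Hq| | |].
  - unfold shift. rewrite Nat.add_0_r. apply HqD.
  - apply (in_H2_tower _ _ (shift k beta)); [intros; apply Hq|now apply tower_budget_shift].
  - unfold shift. rewrite Nat.add_0_r, Nat.add_1_r. apply Hsum.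
Qed.

(** * Periodic points *)

Definition pad_sum (y : nat -> C) (N L : nat) (s : C) : nat -> C :=
  fun i => if (i <? N)%nat then y i
           else if (i <? N + L)%nat then ((s - csum y N) / INR L)%C else 0%C.

Definition pad_len (y : nat -> C) (N : nat) (s : C) (e : R) : nat :=
  S (natceil (Cmod (s - csum y N)%C ^ 2 / e)).

Lemma pad_sum_lt (y : nat -> C) N L s i : (i < N)%nat -> pad_sum y N L s i = y i.
Proof. intros Hi. unfold pad_sum. now destruct (Nat.ltb_spec i N); [|lia]. Qed.

Lemma pad_sum_support (y : nat -> C) N L s i : (N + L <= i)%nat -> pad_sum y N L s i = 0%C.
Proof.
  intros Hi. unfold pad_sum.
  destruct (Nat.ltb_spec i N); [lia|]. destruct (Nat.ltb_spec i (N + L)); [lia|reflexivity].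
Qed.

Lemma csum_pad_sum (y : nat -> C) N L s M :
  (1 <= L)%nat -> (N + L <= M)%nat -> csum (pad_sum y N L s) M = s.
Proof.
  intros HL HM.
  rewrite (csum_window _ 0 (N + L) M) by first [lia | intros; apply pad_sum_support; lia].
  simpl. rewrite csum_split, (csum_ext (fun i => pad_sum y N L s i) y N),
    (csum_ext (fun i => pad_sum y N L s (N + i)%nat) (fun _ => ((s - csum y N) / INR L)%C) L).
  - rewrite csum_const, INR_mul_div_INR by exact HL. ring.
  - intros i Hi. unfold pad_sum.
    destruct (Nat.ltb_spec (N + i) N); [lia|]. now destruct (Nat.ltb_spec (N + i) (N + L)); [|lia].
  - intros i Hi. now apply pad_sum_lt.
Qed.

Lemma sqsum_pad_sum_sub (y : nat -> C) N L s K :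
  (forall i, (N <= i)%nat -> y i = 0%C) -> (1 <= L)%nat ->
  sqsum (H2sub (pad_sum y N L s) y) K <= Cmod (s - csum y N)%C ^ 2 / INR L.
Proof.
  intros Hy HL. assert (HLR : 0 < INR L) by (apply lt_0_INR; lia).
  eapply Rle_trans; [apply (sqsum_le_window _ N L (Cmod (s - csum y N)%C ^ 2 / INR L ^ 2))|].
  - intros i Hi. unfold H2sub. destruct Hi as [Hi|Hi].
    + rewrite pad_sum_lt by exact Hi. ring.
    + rewrite pad_sum_support, Hy by lia. ring.
  - intros i Hi. unfold H2sub, pad_sum. rewrite Hy by lia.
    destruct (Nat.ltb_spec i N); [lia|]. destruct (Nat.ltb_spec i (N + L)); [|lia].
    replace (((s - csum y N) / INR L) - 0)%C with ((s - csum y N) / INR L)%C by ring.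
    rewrite Cmod_div, Cmod_R, Rabs_pos_eq by (lra || now apply RtoC_INR_neq_0).
    right. field. lra.
  - right. field. lra.
Qed.

Lemma sqsum_pad_len_sub (y : nat -> C) N s e K :
  (forall i, (N <= i)%nat -> y i = 0%C) -> 0 < e ->
  sqsum (H2sub (pad_sum y N (pad_len y N s e) s) y) K <= e.
Proof.
  intros Hy He. eapply Rle_trans; [apply sqsum_pad_sum_sub; [exact Hy|unfold pad_len; lia]|].
  apply Rdiv_le_of_natceil; [exact He|unfold pad_len; lia|unfold pad_len; lia].
Qed.

Lemma tower_budget_const (x : nat -> C) q :
  (2 <= q)%nat -> tower_budget (fun _ => x) (fun _ => q) (fun _ => 2 * sqsum x q).
Proof.
  intros Hq _. pose proof (sqsum_nonneg x q).
  assert (HqR : 2 <= INR q) by (apply (le_INR 2); exact Hq).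
  assert (2 * sqsum x q / INR q <= sqsum x q) by (apply Rle_div_l; nra).
  split; lra.
Qed.

Lemma periodic_point_const_tower n T m (x : nat -> C) :
  (2 <= n)%nat -> is_adjoint_W n T -> (1 <= m)%nat -> x 0%nat = csum x (n ^ m) ->
  periodic_point T (tower (fun _ => x) (fun _ => n ^ m)%nat).
Proof.
  intros Hn HT Hm Hsum. pose proof (pow_ge_2 n m Hn Hm) as Hq.
  exists m. split; [exact Hm|].
  apply (adjoint_iter_tower n T m); [lia|exact HT|intros; exact Hq|reflexivity| |exact Hsum].
  exact (in_H2_tower _ _ _ (fun _ => Hq) (tower_budget_const x _ Hq)).
Qed.

Theorem adjoint_W_dense_periodic_points n T :
  (2 <= n)%nat -> is_adjoint_W n T -> dense_periodic_points T.
Proof.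
  intros Hn HT g Hg eps Heps.
  set (d := eps ^ 2 / 16). assert (Hd : 0 < d) by (unfold d; nra).
  destruct (H2_tail_small g d Hg Hd) as [N0 HN0].
  set (N := S N0). set (y := trunc g N).
  assert (Hy : forall i, (N <= i)%nat -> y i = 0%C).
  { intros i Hi. unfold y, trunc. destruct (Nat.ltb_spec i N); [lia|reflexivity]. }
  set (L := pad_len y N (g 0%nat) d). set (x := pad_sum y N L (g 0%nat)).
  set (m := block_exp (N + L) (2 * sqsum x (N + L)) d). set (q := (n ^ m)%nat).
  assert (HmN : (N + L < q)%nat) by apply block_exp_lt_pow, Hn.
  assert (Hm : (1 <= m)%nat) by (unfold m, block_exp, N; lia).
  pose proof (pow_ge_2 n m Hn Hm) as Hq. pose proof (tower_budget_const x q Hq) as Hb.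
  assert (Hxq : sqsum x q = sqsum x (N + L))
    by (apply sqsum_support; [intros; apply pad_sum_support|]; lia).
  assert (Hsum : x 0%nat = csum x q).
  { unfold x.
    rewrite csum_pad_sum, pad_sum_lt by first [lia | unfold N; lia | unfold L, pad_len; lia].
    reflexivity. }
  exists (tower (fun _ => x) (fun _ => q)). split; [|split].
  - exact (in_H2_tower _ _ _ (fun _ => Hq) Hb).
  - exact (periodic_point_const_tower n T m x Hn HT Hm Hsum).
  - apply (H2norm_tower_sub_lt _ _ (fun _ => 2 * sqsum x q) y g d d).
    + intros _. exact Hq.
    + exact Hb.
    + intros i Hi. apply pad_sum_support. lia.
    + intros K. exact (sqsum_pad_len_sub y N (g 0%nat) d K Hy Hd).
    + apply HN0. unfold N. lia.
    + cbv beta. rewrite Hxq.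
      pose proof (block_exp_div_le n (N + L) (2 * sqsum x (N + L)) d Hn Hd) as Htail.
      fold m q in Htail. unfold d in *. lra.
    + exact Heps.
Qed.

(** * A countable dense set of finitely supported vectors *)

Definition nat_stream (c j : nat) : nat :=
  fst (Cantor.of_nat (Nat.iter j (fun x => snd (Cantor.of_nat x)) c)).

Lemma nat_stream_prefix P (h : nat -> nat) :
  exists c, forall j, (j < P)%nat -> nat_stream c j = h j.
Proof.
  revert h. induction P as [|P IH]; intros h; [exists 0%nat; intros; lia|].
  destruct (IH (fun j => h (S j))) as [c Hc].
  exists (Cantor.to_nat (h 0%nat, c)). intros [|j] Hj; unfold nat_stream.
  - change (Nat.iter 0 ?f ?x) with x. now rewrite Cantor.cancel_of_to.
  - rewrite Nat.iter_succ_r, Cantor.cancel_of_to. apply Hc. lia.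
Qed.

Definition int_of_code (p : nat) : R :=
  INR (fst (Cantor.of_nat p)) - INR (snd (Cantor.of_nat p)).

Definition code_of_int (z : Z) : nat := Cantor.to_nat (Z.to_nat z, Z.to_nat (- z)).

Lemma int_of_code_of_int z : int_of_code (code_of_int z) = IZR z.
Proof.
  unfold int_of_code, code_of_int. rewrite Cantor.cancel_of_to. simpl fst; simpl snd.
  destruct (Z_le_gt_dec 0 z).
  - replace (Z.to_nat (- z)) with 0%nat by lia.
    rewrite (INR_IZR_INZ (Z.to_nat z)), Z2Nat.id by lia. simpl. ring.
  - replace (Z.to_nat z) with 0%nat by lia.
    rewrite (INR_IZR_INZ (Z.to_nat (- z))), Z2Nat.id, opp_IZR by lia. simpl. ring.
Qed.

Definition round_down (x : R) : Z := (up x - 1)%Z.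

Lemma round_scaled_err r m : 0 < m -> Rabs (r - IZR (round_down (r * m)) / m) <= / m.
Proof.
  intros Hm. unfold round_down. destruct (archimed (r * m)) as [H1 H2].
  rewrite minus_IZR.
  replace (r - (IZR (up (r * m)) - IZR 1) / m) with ((r * m - IZR (up (r * m)) + 1) * / m)
    by (simpl; field; lra).
  pose proof (Rinv_0_lt_compat m Hm).
  rewrite Rabs_mult, (Rabs_pos_eq (/ m)) by lra. rewrite <- (Rmult_1_l (/ m)) at 2.
  apply Rmult_le_compat_r; [lra|]. apply Rabs_le. lra.
Qed.

(* The code c = <N0, <d, <re, im>>> stands for the vector of length N0 + 1 whose
   j-th coordinate has real and imaginary parts in (1/(d+1)) Z, coded by the j-th
   entries of the streams re and im. *)
Definition grid_len (c : nat) : nat := S (fst (Cantor.of_nat c)).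

Definition grid_vec (c : nat) : nat -> C :=
  let '(d, streams) := Cantor.of_nat (snd (Cantor.of_nat c)) in
  let '(re, im) := Cantor.of_nat streams in
  trunc (fun j => (int_of_code (nat_stream re j) / INR (S d),
                   int_of_code (nat_stream im j) / INR (S d)) : C) (grid_len c).

Lemma grid_vec_support c i : (grid_len c <= i)%nat -> grid_vec c i = 0%C.
Proof.
  intros Hi. unfold grid_vec.
  destruct (Cantor.of_nat (snd (Cantor.of_nat c))) as [d s]. destruct (Cantor.of_nat s) as [re im].
  unfold trunc. destruct (Nat.ltb_spec i (grid_len c)); [lia|reflexivity].
Qed.

Lemma grid_vec_code N0 d re im i :
  grid_vec (Cantor.to_nat (N0, Cantor.to_nat (d, Cantor.to_nat (re, im)))) i
  = trunc (fun j => (int_of_code (nat_stream re j) / INR (S d),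
                     int_of_code (nat_stream im j) / INR (S d)) : C) (S N0) i.
Proof.
  unfold grid_vec, grid_len. rewrite Cantor.cancel_of_to. cbn [fst snd].
  rewrite Cantor.cancel_of_to. cbv beta iota. now rewrite Cantor.cancel_of_to.
Qed.

Lemma sq_le_of_abs_le x e : Rabs x <= e -> x ^ 2 <= e ^ 2.
Proof. intros H. rewrite <- pow2_abs. apply pow_incr. split; [apply Rabs_pos|exact H]. Qed.

Lemma grid_vec_approx (g : nat -> C) N d :
  exists c, forall K,
    sqsum (H2sub (grid_vec c) (trunc g (S N))) K <= INR (S N) * (2 / INR (S d) ^ 2).
Proof.
  set (m := INR (S d)). assert (Hm : 0 < m) by (apply lt_0_INR; lia).
  set (zre j := round_down (Re (g j) * m)). set (zim j := round_down (Im (g j) * m)).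
  destruct (nat_stream_prefix (S N) (fun j => code_of_int (zre j))) as [re Hre].
  destruct (nat_stream_prefix (S N) (fun j => code_of_int (zim j))) as [im Him].
  exists (Cantor.to_nat (N, Cantor.to_nat (d, Cantor.to_nat (re, im)))). intros K.
  apply (sqsum_le_window _ 0 (S N)).
  - intros i [Hi|Hi]; [lia|]. unfold H2sub. rewrite grid_vec_code. unfold trunc.
    destruct (Nat.ltb_spec i (S N)); [lia|ring].
  - intros i Hi. unfold H2sub. rewrite grid_vec_code. unfold trunc.
    destruct (Nat.ltb_spec i (S N)); [|lia].
    rewrite Hre, Him, !int_of_code_of_int by lia. fold m.
    pose proof (sq_le_of_abs_le _ _ (round_scaled_err (Re (g i)) m Hm)) as E1.
    pose proof (sq_le_of_abs_le _ _ (round_scaled_err (Im (g i)) m Hm)) as E2.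
    replace (2 / m ^ 2) with ((/ m) ^ 2 + (/ m) ^ 2) by (field; lra).
    rewrite Cmod2_alt. unfold zre, zim, Re, Im in *. simpl in E1, E2 |- *. nra.
Qed.

Lemma grid_vec_dense g delta :
  in_H2 g -> 0 < delta -> exists c, forall K, sqsum (H2sub (grid_vec c) g) K <= delta.
Proof.
  intros Hg Hdelta.
  destruct (H2_tail_small g (delta / 4) Hg ltac:(lra)) as [N0 HN0].
  set (d := natceil (8 * INR (S N0) / delta)).
  destruct (grid_vec_approx g N0 d) as [c Hc]. set (m := INR (S d)) in Hc |- *.
  assert (Hm : 8 * INR (S N0) <= m * delta).
  { apply Rle_div_l; [lra|]. pose proof (natceil_ge (8 * INR (S N0) / delta)) as Hceil.
    fold d in Hceil. unfold m. rewrite (S_INR d). lra. }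
  assert (Hm1 : 1 <= m) by (unfold m; rewrite S_INR; pose proof (pos_INR d); lra).
  exists c. intros K.
  assert (INR (S N0) * (2 / m ^ 2) <= delta / 4).
  { replace (INR (S N0) * (2 / m ^ 2)) with (8 * INR (S N0) / (4 * m * m)) by (field; lra).
    apply Rle_div_l; [nra|].
    assert (0 <= (m - 1) * (m * delta)) by (apply Rmult_le_pos; nra). nra. }
  pose proof (Hc K). pose proof (sqsum_sub_le2 (grid_vec c) (trunc g (S N0)) g K).
  pose proof (HN0 (S N0) (le_S _ _ (le_n _)) K). lra.
Qed.

(** * A hypercyclic vector *)

(* Block k approximates the k-th grid vector and is padded so that its coefficients
   add up to the constant coefficient of block k + 1.  Since hc_code is the first
   Cantor projection, every grid vector is the target of blocks of arbitrarily
   large index, where all errors are O(1/(k+1)). *)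
Definition hc_code (k : nat) : nat := fst (Cantor.of_nat k).
Definition hc_target (k : nat) : nat -> C := grid_vec (hc_code k).
Definition hc_len (k : nat) : nat := grid_len (hc_code k).
Definition hc_pad (k : nat) : nat :=
  pad_len (hc_target k) (hc_len k) (hc_target (S k) 0%nat) (/ INR (S k)).
Definition hc_block (k : nat) : nat -> C :=
  pad_sum (hc_target k) (hc_len k) (hc_pad k) (hc_target (S k) 0%nat).
Definition hc_budget (k : nat) : R := sqsum (hc_block k) (hc_len k + hc_pad k) + 1.
Definition hc_exp (k : nat) : nat :=
  block_exp (hc_len k + hc_pad k) (hc_budget (S k)) (/ INR (S k)).

Lemma inv_INR_S_pos k : 0 < / INR (S k).
Proof. apply Rinv_0_lt_compat, lt_0_INR. lia. Qed.

Lemma hc_code_recurs c e : 0 < e -> exists k, hc_code k = c /\ / INR (S k) < e.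
Proof.
  intros He. set (k := Cantor.to_nat (c, natceil (/ e))). exists k.
  split; [unfold hc_code, k; now rewrite Cantor.cancel_of_to|].
  pose proof (natceil_ge (/ e)) as Hceil.
  pose proof (Cantor.to_nat_non_decreasing c (natceil (/ e))) as Hk. fold k in Hk.
  apply le_INR in Hk. rewrite plus_INR in Hk. pose proof (pos_INR c).
  assert (Hek : / e < INR (S k)) by (rewrite S_INR; lra).
  apply Rinv_lt_contravar in Hek; [now rewrite Rinv_inv in Hek|].
  apply Rmult_lt_0_compat; [now apply Rinv_0_lt_compat|apply lt_0_INR; lia].
Qed.

Lemma hc_block_fits n k : (2 <= n)%nat -> (hc_len k + hc_pad k < n ^ hc_exp k)%nat.
Proof. apply block_exp_lt_pow. Qed.

Lemma hc_block_support k i : (hc_len k + hc_pad k <= i)%nat -> hc_block k i = 0%C.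
Proof. apply pad_sum_support. Qed.

Lemma hc_block_sub_target k K : sqsum (H2sub (hc_block k) (hc_target k)) K <= / INR (S k).
Proof.
  apply sqsum_pad_len_sub; [|apply inv_INR_S_pos].
  intros i Hi. now apply grid_vec_support.
Qed.

Lemma hc_budget_tail n k :
  (2 <= n)%nat -> hc_budget (S k) / INR (n ^ hc_exp k) <= / INR (S k).
Proof. intros Hn. apply block_exp_div_le; [exact Hn|apply inv_INR_S_pos]. Qed.

Lemma hc_tower_budget n :
  (2 <= n)%nat -> tower_budget hc_block (fun k => n ^ hc_exp k)%nat hc_budget.
Proof.
  intros Hn k. pose proof (sqsum_nonneg (hc_block k) (hc_len k + hc_pad k)).
  split; [unfold hc_budget; lra|].
  pose proof (hc_block_fits n k Hn).
  rewrite (sqsum_support _ (hc_len k + hc_pad k))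
    by first [lia | intros; apply hc_block_support; lia].
  pose proof (hc_budget_tail n k Hn).
  assert (/ INR (S k) <= 1).
  { rewrite <- Rinv_1. apply Rinv_le_contravar; [lra|].
    rewrite S_INR. pose proof (pos_INR k). lra. }
  unfold hc_budget at 2. lra.
Qed.

Lemma hc_block_sum n k :
  (2 <= n)%nat -> hc_block (S k) 0%nat = csum (hc_block k) (n ^ hc_exp k).
Proof.
  intros Hn. pose proof (hc_block_fits n k Hn).
  unfold hc_block at 2. rewrite csum_pad_sum by first [lia | unfold hc_pad, pad_len; lia].
  unfold hc_block. apply pad_sum_lt. unfold hc_len, grid_len. lia.
Qed.

Theorem adjoint_W_hypercyclic n T : (2 <= n)%nat -> is_adjoint_W n T -> hypercyclic T.
Proof.
  intros Hn HT. set (q := fun k => (n ^ hc_exp k)%nat).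
  assert (HD : forall k, (1 <= hc_exp k)%nat)
    by (intros k; unfold hc_exp, block_exp, hc_pad, pad_len; lia).
  assert (Hq : forall k, (2 <= q k)%nat) by (intros k; now apply pow_ge_2).
  pose proof (hc_tower_budget n Hn) as Hb.
  exists (tower hc_block q). split; [exact (in_H2_tower _ _ _ Hq Hb)|].
  intros g Hg eps Heps.
  destruct (grid_vec_dense g (eps ^ 2 / 16) Hg ltac:(nra)) as [c Hc].
  destruct (hc_code_recurs c (eps ^ 2 / 8) ltac:(nra)) as [k [Hck Hk]].
  destruct (adjoint_iter_tower_shift n T hc_exp q hc_block hc_budget Hn HT HD
              (fun _ => eq_refl) Hb (fun l => hc_block_sum n l Hn) k) as [m Hm].
  exists m. rewrite Hm.
  apply (H2norm_tower_sub_lt _ _ (shift k hc_budget) (hc_target k) g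
           (/ INR (S k)) (eps ^ 2 / 16)).
  - intros l. apply Hq.
  - rewrite !shift_succ. now apply tower_budget_shift.
  - intros i Hi. unfold shift, q in *. rewrite Nat.add_0_r in *. apply hc_block_support.
    pose proof (hc_block_fits n k Hn). lia.
  - intros K. unfold shift. rewrite Nat.add_0_r. apply hc_block_sub_target.
  - intros K. unfold hc_target. rewrite Hck. apply Hc.
  - unfold shift, q. rewrite Nat.add_0_r, Nat.add_1_r. pose proof (hc_budget_tail n k Hn). lra.
  - exact Heps.
Qed.

Theorem mainTheorem2 (n : nat) (hn : (2 <= n)%nat)
  (Wstar : (nat -> C) -> (nat -> C)) (hW : is_adjoint_W n Wstar) :
  devaney_chaotic Wstar.
Proof.
  split.
  - exact (adjoint_W_hypercyclic n Wstar hn hW).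
  - exact (adjoint_W_dense_periodic_points n Wstar hn hW).
Qed.
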